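(* Let $I$ be a nonempty set, $1<p<\infty$, and for each $i\in I$ let $A_i:X_i\to Y_i$ be a bounded linear operator with $\sup_{i\in I}\|A_i\|<\infty$. Let $A:(\bigoplus_{i\in I}X_i)_{\ell_p(I)}\to(\bigoplus_{i\in I}Y_i)_{\ell_p(I)}$ be defined by $A|_{X_i}=A_i$. Then $\mathbf t_p(A)\le\sup_{i\in I}\max\{\mathbf t_p(A_i),\|A_i\|\}$. The analogous statement holds for $\mathbf t_\infty$ with the $\ell_p(I)$-direct sums replaced by $c_0(I)$-direct sums.
   Context: For an operator $B:X\to Y$ and $1<p<\infty$, $\mathbf t_p(B)$ is the infimum of those $C>0$ such that for every $y\in Y$, $\sigma>0$ and weakly null net $(x_\lambda)\subset\sigma B_X$, $\limsup_\lambda\|y+Bx_\lambda\|^p\le\|y\|^p+C^p\sigma^p$; $\mathbf t_\infty(B)$ is the infimum of those $C>0$ such that under the same quantifiers $\limsup_\lambda\|y+Bx_\lambda\|\le\max\{\|y\|,C\sigma\}$ (infimum of empty set $=\infty$). *)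

From Stdlib Require Import Reals Lra List.
Open Scope R_scope.

(* ---------- real powers, with the convention 0^q = 0 (q > 0) ---------- *)
Definition rpow (a q : R) : R := if Rle_dec a 0 then 0 else Rpower a q.

Lemma rpow_nonneg a q : 0 <= rpow a q.
Proof. unfold rpow, Rpower; destruct (Rle_dec a 0); [lra|]. left; apply exp_pos. Qed.

Lemma rpow_mono a b q : 0 <= q -> 0 <= a <= b -> rpow a q <= rpow b q.
Proof.
  intros Hq Hab; unfold rpow.
  destruct (Rle_dec a 0); destruct (Rle_dec b 0).
  - lra.
  - unfold Rpower; left; apply exp_pos.
  - lra.
  - apply Rle_Rpower_l; lra.
Qed.

Lemma rpow_mult a b q : 0 <= a -> 0 <= b -> rpow (a * b) q = rpow a q * rpow b q.
Proof.
  intros Ha Hb; unfold rpow.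
  destruct (Rle_dec a 0) as [Ha0|Ha0].
  - assert (a = 0) by lra; subst. rewrite Rmult_0_l.
    destruct (Rle_dec 0 0); [ring | lra].
  - destruct (Rle_dec b 0) as [Hb0|Hb0].
    + assert (b = 0) by lra; subst. rewrite Rmult_0_r.
      destruct (Rle_dec 0 0); [ring | lra].
    + destruct (Rle_dec (a * b) 0) as [H|H].
      * assert (0 < a * b) by (apply Rmult_lt_0_compat; lra). lra.
      * symmetry; apply Rpower_mult_distr; lra.
Qed.

Lemma rpow_max a b q : rpow (Rmax a b) q <= rpow a q + rpow b q.
Proof.
  unfold Rmax; destruct (Rle_dec a b);
  [pose proof (rpow_nonneg a q) | pose proof (rpow_nonneg b q)]; lra.
Qed.

Definition lsum {I : Type} (f : I -> R) (l : list I) : R :=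
  fold_right (fun i s => f i + s) 0 l.

Lemma lsum_le {I : Type} (f g : I -> R) l :
  (forall i, f i <= g i) -> lsum f l <= lsum g l.
Proof. intros H; induction l; simpl; [lra|]. specialize (H a); lra. Qed.

Lemma lsum_plus {I : Type} (f g : I -> R) l :
  lsum (fun i => f i + g i) l = lsum f l + lsum g l.
Proof. induction l; simpl; [ring|]. rewrite IHl; ring. Qed.

Lemma lsum_scal {I : Type} (c : R) (f : I -> R) l :
  lsum (fun i => c * f i) l = c * lsum f l.
Proof. induction l; simpl; [ring|]. rewrite IHl; ring. Qed.

Lemma lsum_nonneg {I : Type} (f : I -> R) l :
  (forall i, 0 <= f i) -> 0 <= lsum f l.
Proof. intros H; induction l; simpl; [lra|]. specialize (H a); lra. Qed.

Lemma lsum_in {I : Type} (f : I -> R) l i :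
  (forall j, 0 <= f j) -> In i l -> f i <= lsum f l.
Proof.
  intros H; induction l as [|a l IH]; simpl; [tauto|].
  intros [->|Hi].
  - pose proof (lsum_nonneg f l H); lra.
  - specialize (IH Hi); specialize (H a); lra.
Qed.

Record PreNormed := {
  pn_car :> Type;
  pn_add : pn_car -> pn_car -> pn_car;
  pn_scal : R -> pn_car -> pn_car;
  pn_norm : pn_car -> R }.

Arguments pn_add {_}.
Arguments pn_scal {_}.
Arguments pn_norm {_}.

Record NormedSpace := {
  ns_pre :> PreNormed;
  ns_zero : ns_pre;
  ns_opp : ns_pre -> ns_pre;
  ns_add_assoc : forall x y z : ns_pre, pn_add x (pn_add y z) = pn_add (pn_add x y) z;
  ns_add_comm : forall x y : ns_pre, pn_add x y = pn_add y x;
  ns_add_zero : forall x : ns_pre, pn_add x ns_zero = x;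
  ns_add_opp : forall x : ns_pre, pn_add x (ns_opp x) = ns_zero;
  ns_scal_assoc : forall a b (x : ns_pre), pn_scal a (pn_scal b x) = pn_scal (a * b) x;
  ns_scal_one : forall x : ns_pre, pn_scal 1 x = x;
  ns_scal_distr_l : forall a (x y : ns_pre), pn_scal a (pn_add x y) = pn_add (pn_scal a x) (pn_scal a y);
  ns_scal_distr_r : forall a b (x : ns_pre), pn_scal (a + b) x = pn_add (pn_scal a x) (pn_scal b x);
  ns_norm_nonneg : forall x : ns_pre, 0 <= pn_norm x;
  ns_norm_eq0 : forall x : ns_pre, pn_norm x = 0 -> x = ns_zero;
  ns_norm_scal : forall a (x : ns_pre), pn_norm (pn_scal a x) = Rabs a * pn_norm x;
  ns_norm_triangle : forall x y : ns_pre, pn_norm (pn_add x y) <= pn_norm x + pn_norm y;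
  ns_complete : forall u : nat -> ns_pre,
    (forall eps, 0 < eps -> exists N, forall m n, (N <= m)%nat -> (N <= n)%nat ->
        pn_norm (pn_add (u m) (ns_opp (u n))) < eps) ->
    exists l, forall eps, 0 < eps -> exists N, forall n, (N <= n)%nat ->
        pn_norm (pn_add (u n) (ns_opp l)) < eps }.

Record LinOp (X Y : NormedSpace) := {
  lo_fun :> X -> Y;
  lo_add : forall x y, lo_fun (pn_add x y) = pn_add (lo_fun x) (lo_fun y);
  lo_scal : forall a x, lo_fun (pn_scal a x) = pn_scal a (lo_fun x);
  lo_bdd : exists C, forall x, pn_norm (lo_fun x) <= C * pn_norm x }.

Definition opnorm_le (X Y : PreNormed) (B : X -> Y) (M : R) : Prop :=
  forall x : X, pn_norm x <= 1 -> pn_norm (B x) <= M.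

Record Directed := {
  dir_car :> Type;
  dir_le : dir_car -> dir_car -> Prop;
  dir_refl : forall a, dir_le a a;
  dir_trans : forall a b c, dir_le a b -> dir_le b c -> dir_le a c;
  dir_nonempty : inhabited dir_car;
  dir_up : forall a b, exists c, dir_le a c /\ dir_le b c }.

Definition is_bdd_lin_functional (X : PreNormed) (f : X -> R) : Prop :=
  (forall x y, f (pn_add x y) = f x + f y) /\
  (forall a x, f (pn_scal a x) = a * f x) /\
  (exists C, forall x, Rabs (f x) <= C * pn_norm x).

Definition weakly_null (X : PreNormed) (D : Directed) (x : D -> X) : Prop :=
  forall f : X -> R, is_bdd_lin_functional X f ->
    forall eps, 0 < eps -> exists l0 : D, forall l, dir_le D l0 l -> Rabs (f (x l)) < eps.

Definition limsup_le (D : Directed) (a : D -> R) (c : R) : Prop :=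
  forall eps, 0 < eps -> exists l0 : D, forall l, dir_le D l0 l -> a l <= c + eps.

Definition tp_admissible (p : R) (X Y : PreNormed) (B : X -> Y) (C : R) : Prop :=
  0 < C /\
  forall (y : Y) (sigma : R) (D : Directed) (x : D -> X),
    0 < sigma -> (forall l, pn_norm (x l) <= sigma) -> weakly_null X D x ->
    limsup_le D (fun l => rpow (pn_norm (pn_add y (B (x l)))) p)
                (rpow (pn_norm y) p + rpow C p * rpow sigma p).

Definition tinf_admissible (X Y : PreNormed) (B : X -> Y) (C : R) : Prop :=
  0 < C /\
  forall (y : Y) (sigma : R) (D : Directed) (x : D -> X),
    0 < sigma -> (forall l, pn_norm (x l) <= sigma) -> weakly_null X D x ->
    limsup_le D (fun l => pn_norm (pn_add y (B (x l))))
                (Rmax (pn_norm y) (C * sigma)).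

Arguments tp_admissible p {X Y} B C.
Arguments tinf_admissible {X Y} B C.
Arguments opnorm_le {X Y} B M.

(* t_p(B) <= M   (t_p(B) = inf of admissible C, inf of empty set = +oo) *)
Definition tp_le (p : R) (X Y : PreNormed) (B : X -> Y) (M : R) : Prop :=
  forall eps, 0 < eps -> exists C, tp_admissible p B C /\ C < M + eps.

Definition tinf_le (X Y : PreNormed) (B : X -> Y) (M : R) : Prop :=
  forall eps, 0 < eps -> exists C, tinf_admissible B C /\ C < M + eps.

Arguments tp_le p {X Y} B M.
Arguments weakly_null {X D} x.
Arguments limsup_le {D} a c.
Arguments tinf_le {X Y} B M.

Definition lp_mem {I : Type} (X : I -> NormedSpace) (p : R) (x : forall i, X i) : Prop :=
  exists M, forall l : list I, NoDup l ->
    lsum (fun i => rpow (pn_norm (x i)) p) l <= M.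

Definition lpT {I : Type} (X : I -> NormedSpace) (p : R) : Type :=
  { x : forall i, X i | lp_mem X p x }.

Lemma lp_mem_add {I : Type} (X : I -> NormedSpace) (p : R) (hp : 1 < p)
  (x y : forall i, X i) : lp_mem X p x -> lp_mem X p y ->
  lp_mem X p (fun i => pn_add (x i) (y i)).
Proof.
  intros [Mx Hx] [My Hy].
  exists (rpow 2 p * (Mx + My)); intros l Hl.
  eapply Rle_trans.
  - apply lsum_le with (g := fun i => rpow 2 p *
       (rpow (pn_norm (x i)) p + rpow (pn_norm (y i)) p)).
    intros i.
    pose proof (ns_norm_nonneg _ (x i)); pose proof (ns_norm_nonneg _ (y i)).
    pose proof (ns_norm_nonneg _ (pn_add (x i) (y i))).
    pose proof (ns_norm_triangle _ (x i) (y i)).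
    eapply Rle_trans.
    + apply rpow_mono with (b := 2 * Rmax (pn_norm (x i)) (pn_norm (y i))); [lra|].
      split; [lra|]. unfold Rmax; destruct (Rle_dec _ _); lra.
    + rewrite rpow_mult; [| lra | unfold Rmax; destruct (Rle_dec _ _); lra].
      apply Rmult_le_compat_l; [apply rpow_nonneg|apply rpow_max].
  - rewrite lsum_scal, lsum_plus.
    apply Rmult_le_compat_l; [apply rpow_nonneg|].
    specialize (Hx l Hl); specialize (Hy l Hl); lra.
Qed.

Lemma lp_mem_scal {I : Type} (X : I -> NormedSpace) (p : R) (hp : 1 < p)
  (a : R) (x : forall i, X i) : lp_mem X p x ->
  lp_mem X p (fun i => pn_scal a (x i)).
Proof.
  intros [Mx Hx].
  exists (rpow (Rabs a) p * Mx); intros l Hl.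
  eapply Rle_trans.
  - apply lsum_le with (g := fun i => rpow (Rabs a) p * rpow (pn_norm (x i)) p).
    intros i. rewrite ns_norm_scal, rpow_mult;
      [lra | apply Rabs_pos | apply ns_norm_nonneg].
  - rewrite lsum_scal. apply Rmult_le_compat_l; [apply rpow_nonneg|]. auto.
Qed.

Definition lp_add {I : Type} (X : I -> NormedSpace) (p : R) (hp : 1 < p)
  (x y : lpT X p) : lpT X p :=
  exist _ (fun i => pn_add (proj1_sig x i) (proj1_sig y i))
        (@lp_mem_add I X p hp _ _ (proj2_sig x) (proj2_sig y)).

Definition lp_scal {I : Type} (X : I -> NormedSpace) (p : R) (hp : 1 < p)
  (a : R) (x : lpT X p) : lpT X p :=
  exist _ (fun i => pn_scal a (proj1_sig x i)) (@lp_mem_scal I X p hp a _ (proj2_sig x)).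

Definition lp_partial {I : Type} (X : I -> NormedSpace) (p : R) (x : lpT X p) : R -> Prop :=
  fun r => exists l : list I, NoDup l /\
    r = lsum (fun i => rpow (pn_norm (proj1_sig x i)) p) l.

Lemma lp_partial_bound {I : Type} (X : I -> NormedSpace) (p : R) (x : lpT X p) :
  bound (lp_partial X p x).
Proof.
  destruct (proj2_sig x) as [M HM]. exists M. intros r [l [Hl ->]]. auto.
Qed.

Lemma lp_partial_ne {I : Type} (X : I -> NormedSpace) (p : R) (x : lpT X p) :
  exists r, lp_partial X p x r.
Proof. exists 0. exists nil. split; [constructor | reflexivity]. Qed.

(* ||x|| = (sup over finite F of sum_{i in F} ||x_i||^p)^(1/p) *)
Definition lp_norm {I : Type} (X : I -> NormedSpace) (p : R) (x : lpT X p) : R :=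
  rpow (proj1_sig (completeness _ (@lp_partial_bound I X p x) (@lp_partial_ne I X p x))) (1 / p).

Definition lp_sum {I : Type} (X : I -> NormedSpace) (p : R) (hp : 1 < p) : PreNormed :=
  {| pn_car := lpT X p; pn_add := @lp_add I X p hp; pn_scal := @lp_scal I X p hp;
     pn_norm := @lp_norm I X p |}.

Lemma lp_mem_op {I : Type} (X Y : I -> NormedSpace) (p : R) (hp : 1 < p)
  (A : forall i, LinOp (X i) (Y i))
  (HK : exists K, forall i (x : X i), pn_norm (A i x) <= K * pn_norm x)
  (x : forall i, X i) : lp_mem X p x -> lp_mem Y p (fun i => A i (x i)).
Proof.
  intros [Mx Hx]. destruct HK as [K HK].
  exists (rpow (Rabs K) p * Mx); intros l Hl.
  eapply Rle_trans.
  - apply lsum_le with (g := fun i => rpow (Rabs K) p * rpow (pn_norm (x i)) p).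
    intros i. rewrite <- rpow_mult; [| apply Rabs_pos | apply ns_norm_nonneg].
    apply rpow_mono; [lra|]. split; [apply ns_norm_nonneg|].
    eapply Rle_trans; [apply HK|]. apply Rmult_le_compat_r;
      [apply ns_norm_nonneg | apply RRle_abs].
  - rewrite lsum_scal. apply Rmult_le_compat_l; [apply rpow_nonneg|]. auto.
Qed.

Definition lp_op {I : Type} {X Y : I -> NormedSpace} {p : R} (hp : 1 < p)
  (A : forall i, LinOp (X i) (Y i))
  (HK : exists K, forall i (x : X i), pn_norm (A i x) <= K * pn_norm x)
  (x : lp_sum X p hp) : lp_sum Y p hp :=
  exist _ (fun i => A i (proj1_sig x i)) (@lp_mem_op I X Y p hp A HK _ (proj2_sig x)).

Definition c0_mem {I : Type} (X : I -> NormedSpace) (x : forall i, X i) : Prop :=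
  forall eps, 0 < eps -> exists l : list I,
    forall i, eps <= pn_norm (x i) -> In i l.

Definition c0T {I : Type} (X : I -> NormedSpace) : Type :=
  { x : forall i, X i | c0_mem X x }.

Lemma c0_mem_add {I : Type} (X : I -> NormedSpace) (x y : forall i, X i) :
  c0_mem X x -> c0_mem X y -> c0_mem X (fun i => pn_add (x i) (y i)).
Proof.
  intros Hx Hy eps He.
  destruct (Hx (eps / 2)) as [l1 H1]; [lra|].
  destruct (Hy (eps / 2)) as [l2 H2]; [lra|].
  exists (l1 ++ l2); intros i Hi. apply in_or_app.
  pose proof (ns_norm_triangle _ (x i) (y i)).
  destruct (Rle_dec (eps / 2) (pn_norm (x i))); [left; auto|].
  right; apply H2; lra.
Qed.

Lemma c0_mem_lip {I : Type} (X Y : I -> NormedSpace) (K : R)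
  (x : forall i, X i) (z : forall i, Y i) :
  (forall i, pn_norm (z i) <= K * pn_norm (x i)) -> c0_mem X x -> c0_mem Y z.
Proof.
  intros Hz Hx eps He.
  destruct (Hx (eps / (Rabs K + 1))) as [l Hl].
  { apply Rdiv_lt_0_compat; [lra|]. pose proof (Rabs_pos K); lra. }
  exists l; intros i Hi. apply Hl.
  pose proof (Rabs_pos K). pose proof (ns_norm_nonneg _ (x i)).
  pose proof (RRle_abs K). specialize (Hz i).
  apply Rmult_le_reg_r with (Rabs K + 1); [lra|].
  unfold Rdiv; rewrite Rmult_assoc, Rinv_l, Rmult_1_r; [|lra].
  assert (K * pn_norm (x i) <= Rabs K * pn_norm (x i))
    by (apply Rmult_le_compat_r; lra).
  nra.
Qed.

Lemma c0_mem_scal {I : Type} (X : I -> NormedSpace) (a : R) (x : forall i, X i) :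
  c0_mem X x -> c0_mem X (fun i => pn_scal a (x i)).
Proof.
  apply c0_mem_lip with (K := Rabs a). intros i. rewrite ns_norm_scal; lra.
Qed.

Definition c0_add {I : Type} (X : I -> NormedSpace) (x y : c0T X) : c0T X :=
  exist _ (fun i => pn_add (proj1_sig x i) (proj1_sig y i))
        (@c0_mem_add I X _ _ (proj2_sig x) (proj2_sig y)).

Definition c0_scal {I : Type} (X : I -> NormedSpace) (a : R) (x : c0T X) : c0T X :=
  exist _ (fun i => pn_scal a (proj1_sig x i)) (@c0_mem_scal I X a _ (proj2_sig x)).

Definition c0_vals {I : Type} (X : I -> NormedSpace) (x : c0T X) : R -> Prop :=
  fun r => r = 0 \/ exists i, r = pn_norm (proj1_sig x i).

Lemma c0_vals_bound {I : Type} (X : I -> NormedSpace) (x : c0T X) : bound (c0_vals X x).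
Proof.
  destruct (proj2_sig x 1 Rlt_0_1) as [l Hl].
  exists (1 + lsum (fun i => pn_norm (proj1_sig x i)) l).
  assert (H0 : 0 <= lsum (fun i => pn_norm (proj1_sig x i)) l)
    by (apply lsum_nonneg; intros; apply ns_norm_nonneg).
  intros r [->|[i ->]]; [lra|].
  destruct (Rle_dec 1 (pn_norm (proj1_sig x i))) as [H|H].
  - pose proof (lsum_in (fun i => pn_norm (proj1_sig x i)) l i
                  (fun j => ns_norm_nonneg _ _) (Hl i H)). simpl in *; lra.
  - lra.
Qed.

Lemma c0_vals_ne {I : Type} (X : I -> NormedSpace) (x : c0T X) : exists r, c0_vals X x r.
Proof. exists 0; left; reflexivity. Qed.

(* ||x|| = sup_i ||x_i||  (0 is included, harmless since norms are >= 0) *)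
Definition c0_norm {I : Type} (X : I -> NormedSpace) (x : c0T X) : R :=
  proj1_sig (completeness _ (@c0_vals_bound I X x) (@c0_vals_ne I X x)).

Definition c0_sum {I : Type} (X : I -> NormedSpace) : PreNormed :=
  {| pn_car := c0T X; pn_add := @c0_add I X; pn_scal := @c0_scal I X;
     pn_norm := @c0_norm I X |}.

Lemma c0_mem_op {I : Type} (X Y : I -> NormedSpace)
  (A : forall i, LinOp (X i) (Y i))
  (HK : exists K, forall i (x : X i), pn_norm (A i x) <= K * pn_norm x)
  (x : forall i, X i) : c0_mem X x -> c0_mem Y (fun i => A i (x i)).
Proof.
  intros Hx. destruct HK as [K HK]. apply (@c0_mem_lip I X Y K x); auto.
Qed.

Definition c0_op {I : Type} {X Y : I -> NormedSpace}
  (A : forall i, LinOp (X i) (Y i))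
  (HK : exists K, forall i (x : X i), pn_norm (A i x) <= K * pn_norm x)
  (x : c0_sum X) : c0_sum Y :=
  exist _ (fun i => A i (proj1_sig x i)) (@c0_mem_op I X Y A HK _ (proj2_sig x)).

From Stdlib Require Import Reals Lra Lia List ZArith Classical ClassicalEpsilon.
Open Scope R_scope.

(* Fix a finite set F of coordinates carrying all but a small part of the
   p-th power of the norm of y.  On each coordinate in F the hypothesis
   t_p(A_i) <= M controls ||y_i + A_i x_i||^p eventually; as the coordinates of
   the net have no common size, it is applied to x_i truncated at each level of
   a finite grid of [0, sigma], which costs only a small slack eta.  Off F,
   ||A_i|| <= M and (a + b)^p <= (1 + 1/th)^p a^p + (1 + th)^p b^p bound the
   coordinate by a multiple of the small tail of y plus ((1 + th) M)^p ||x_i||^p.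
   Summing over coordinates gives
   limsup ||y + A x||^p <= ||y||^p + ((1 + th) (M + eps))^p sigma^p.
   For c_0 sums the same argument works with maxima instead of sums, and the
   hypothesis on t_oo(A_i) applies directly, without truncation. *)

Lemma rpow_pos_eq a q : 0 < a -> rpow a q = Rpower a q.
Proof. intros Ha; unfold rpow; destruct (Rle_dec a 0); [lra | reflexivity]. Qed.

Lemma rpow_0_l q : rpow 0 q = 0.
Proof. unfold rpow; destruct (Rle_dec 0 0); lra. Qed.

Lemma rpow_pos a q : 0 < a -> 0 < rpow a q.
Proof. intros Ha; rewrite rpow_pos_eq by exact Ha; unfold Rpower; apply exp_pos. Qed.

Lemma rpow_rpow_1 a q r : 0 <= a -> q * r = 1 -> rpow (rpow a q) r = a.
Proof.
  intros Ha Hqr; destruct (Req_dec a 0) as [->|Ha0]; [rewrite !rpow_0_l; reflexivity|].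
  rewrite (rpow_pos_eq a q), rpow_pos_eq by (unfold Rpower; try apply exp_pos; lra).
  rewrite Rpower_mult, Hqr; apply Rpower_1; lra.
Qed.

Lemma rpow_add_le p th a b c : 0 <= p -> 0 < th -> 0 <= a -> 0 <= b -> 0 <= c ->
  rpow (a + c * b) p <= rpow (1 + 1 / th) p * rpow a p + rpow ((1 + th) * c) p * rpow b p.
Proof.
  intros Hp Hth Ha Hb Hc.
  assert (Hith : 0 < 1 / th) by (apply Rdiv_lt_0_compat; lra).
  rewrite <- !rpow_mult by nra.
  pose proof (rpow_nonneg ((1 + 1 / th) * a) p).
  pose proof (rpow_nonneg ((1 + th) * c * b) p).
  destruct (Rle_dec a (th * (c * b))).
  - assert (rpow (a + c * b) p <= rpow ((1 + th) * c * b) p) by (apply rpow_mono; nra).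
    lra.
  - assert (c * b <= 1 / th * a).
    { apply Rmult_le_reg_l with th; [lra|].
      replace (th * (1 / th * a)) with a by (field; lra). lra. }
    assert (rpow (a + c * b) p <= rpow ((1 + 1 / th) * a) p) by (apply rpow_mono; nra).
    lra.
Qed.

Lemma mul_div_succ_le a b : 0 <= a -> 0 <= b -> a * (b / (a + 1)) <= b.
Proof.
  intros Ha Hb. apply Rmult_le_reg_r with (a + 1); [lra|].
  replace (a * (b / (a + 1)) * (a + 1)) with (a * b) by (field; lra). nra.
Qed.

Lemma grid_point (sigma eta : R) : 0 < eta ->
  exists G : nat, forall r, 0 <= r <= sigma ->
    exists k, (k <= G)%nat /\ r <= (INR k + 1) * eta <= r + eta.
Proof.
  intros He. exists (Z.to_nat (up (sigma / eta))). intros r Hr.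
  destruct (archimed (r / eta)) as [H1 H2].
  destruct (archimed (sigma / eta)) as [H3 H4].
  set (z := up (r / eta)) in *. set (w := up (sigma / eta)) in *.
  assert (Hrs : r / eta <= sigma / eta)
    by (unfold Rdiv; apply Rmult_le_compat_r; [apply Rlt_le, Rinv_0_lt_compat|]; lra).
  assert (Hr0 : 0 <= r / eta) by (apply Rle_mult_inv_pos; lra).
  assert (Hz : (0 < z)%Z) by (apply lt_IZR; simpl; lra).
  assert (Hzw : (z - 1 < w)%Z) by (apply lt_IZR; rewrite minus_IZR; simpl; lra).
  exists (Z.to_nat (z - 1)). split; [lia|].
  rewrite INR_IZR_INZ, Z2Nat.id, minus_IZR by lia. simpl.
  replace (IZR z - 1 + 1) with (IZR z) by ring.
  split; apply Rmult_le_reg_r with (/ eta); try (apply Rinv_0_lt_compat; lra);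
    rewrite ?Rmult_plus_distr_r, Rmult_assoc, Rinv_r, Rmult_1_r by lra;
    unfold Rdiv in *; lra.
Qed.

Definition eventually (D : Directed) (P : D -> Prop) : Prop :=
  exists l0 : D, forall l, dir_le D l0 l -> P l.

Lemma eventually_mono (D : Directed) (P Q : D -> Prop) :
  eventually D P -> (forall l, P l -> Q l) -> eventually D Q.
Proof. intros [l0 Hl0] HPQ; exists l0; auto. Qed.

Lemma eventually_and (D : Directed) (P Q : D -> Prop) :
  eventually D P -> eventually D Q -> eventually D (fun l => P l /\ Q l).
Proof.
  intros [a Ha] [b Hb]. destruct (dir_up D a b) as [c [Hac Hbc]].
  exists c; intros l Hl; split; [apply Ha | apply Hb]; eapply dir_trans; eauto.
Qed.

Lemma eventually_forall_in (D : Directed) {A : Type} (L : list A) (P : A -> D -> Prop) :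
  (forall a, In a L -> eventually D (P a)) ->
  eventually D (fun l => forall a, In a L -> P a l).
Proof.
  induction L as [|a L IH]; intros H.
  - destruct (dir_nonempty D) as [d]. exists d; intros l _ a [].
  - eapply eventually_mono.
    + apply eventually_and; [apply (H a); left; reflexivity|].
      apply IH; intros b Hb; apply H; right; exact Hb.
    + intros l [Ha HL] b [<-|Hb]; auto.
Qed.

Section ListSums.
Context {I : Type}.

Lemma lsum_app (f : I -> R) L1 L2 : lsum f (L1 ++ L2) = lsum f L1 + lsum f L2.
Proof. induction L1 as [|a L1 IH]; simpl; [ring|]. rewrite IH; ring. Qed.

Lemma lsum_const (c : R) (L : list I) : lsum (fun _ => c) L = INR (length L) * c.
Proof.
  induction L as [|a L IH]; simpl length; [simpl; ring|].
  rewrite S_INR; simpl; rewrite IH; ring.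
Qed.

Lemma lsum_le_in (f g : I -> R) L :
  (forall i, In i L -> f i <= g i) -> lsum f L <= lsum g L.
Proof.
  induction L as [|a L IH]; intros H; simpl; [lra|].
  apply Rplus_le_compat; [apply H; left; reflexivity|].
  apply IH; intros i Hi; apply H; right; exact Hi.
Qed.

Lemma lsum_filter (P : I -> bool) (f : I -> R) L :
  lsum f L = lsum f (filter P L) + lsum f (filter (fun i => negb (P i)) L).
Proof. induction L as [|a L IH]; simpl; [ring|]. destruct (P a); simpl; rewrite IH; ring. Qed.

Definition in_listb (F : list I) (i : I) : bool :=
  if excluded_middle_informative (In i F) then true else false.

Lemma in_listb_spec F i : in_listb F i = true <-> In i F.
Proof. unfold in_listb; destruct (excluded_middle_informative _); split; auto; discriminate. Qed.

Lemma lsum_split_estimate (F L : list I) (f a r : I -> R) (K Q e S d : R) :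
  NoDup F -> NoDup L -> 0 <= K -> 0 <= e ->
  (forall L', NoDup L' -> lsum a L' <= S) -> S - d < lsum a F ->
  (forall i, In i F -> f i <= a i + Q * r i + e) ->
  (forall i, ~ In i F -> f i <= K * a i + Q * r i) ->
  lsum f L <= S + K * d + Q * lsum r L + INR (length F) * e.
Proof.
  intros HF HL HK He HS HSF Hin Hout.
  set (Lin := filter (in_listb F) L).
  set (Lout := filter (fun i => negb (in_listb F i)) L).
  assert (HLin : forall i, In i Lin -> In i F)
    by (intros i Hi; apply filter_In in Hi; apply in_listb_spec; tauto).
  assert (HLout : forall i, In i Lout -> ~ In i F).
  { intros i Hi HiF; apply filter_In in Hi; apply in_listb_spec in HiF.
    rewrite HiF in Hi; destruct Hi as [_ Hi]; discriminate. }
  assert (Hhead : lsum a Lin <= S) by (apply HS, NoDup_filter, HL).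
  assert (Htail : lsum a Lout <= d).
  { assert (lsum a (Lout ++ F) <= S).
    { apply HS, NoDup_app; [apply NoDup_filter, HL | exact HF | exact HLout]. }
    rewrite lsum_app in H; lra. }
  assert (Hcount : INR (length Lin) <= INR (length F))
    by (apply le_INR, NoDup_incl_length; [apply NoDup_filter, HL | exact HLin]).
  assert (Hfin : lsum f Lin <= lsum a Lin + Q * lsum r Lin + INR (length Lin) * e).
  { rewrite <- lsum_const, <- lsum_scal, <- !lsum_plus.
    apply lsum_le_in; intros i Hi; apply Hin, HLin, Hi. }
  assert (Hfout : lsum f Lout <= K * lsum a Lout + Q * lsum r Lout).
  { rewrite <- !lsum_scal, <- lsum_plus.
    apply lsum_le_in; intros i Hi; apply Hout, HLout, Hi. }
  rewrite (lsum_filter (in_listb F) f L), (lsum_filter (in_listb F) r L); fold Lin Lout.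
  assert (K * lsum a Lout <= K * d) by (apply Rmult_le_compat_l; lra).
  assert (INR (length Lin) * e <= INR (length F) * e) by (apply Rmult_le_compat_r; lra).
  lra.
Qed.

End ListSums.

Lemma ns_scal_0 (X : NormedSpace) (x : X) : pn_scal 0 x = ns_zero X.
Proof. apply ns_norm_eq0. rewrite ns_norm_scal, Rabs_R0; ring. Qed.

Lemma opnorm_le_nonneg (X Y : NormedSpace) (B : X -> Y) M : opnorm_le B M -> 0 <= M.
Proof.
  intros HB. apply Rle_trans with (pn_norm (B (ns_zero X))); [apply ns_norm_nonneg|].
  apply HB. rewrite <- (ns_scal_0 X (ns_zero X)), ns_norm_scal, Rabs_R0; lra.
Qed.

Lemma opnorm_le_bound (X Y : NormedSpace) (B : LinOp X Y) M :
  opnorm_le B M -> forall z, pn_norm (B z) <= M * pn_norm z.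
Proof.
  intros HB z. pose proof (ns_norm_nonneg _ z) as Hz0.
  destruct (Req_dec (pn_norm z) 0) as [Hz|Hz].
  - assert (Hz' : z = pn_scal 0 z) by (rewrite ns_scal_0; apply ns_norm_eq0, Hz).
    rewrite Hz', lo_scal, !ns_norm_scal, Rabs_R0; lra.
  - assert (Hz' : z = pn_scal (pn_norm z) (pn_scal (1 / pn_norm z) z)).
    { rewrite ns_scal_assoc. replace (pn_norm z * (1 / pn_norm z)) with 1 by (field; lra).
      now rewrite ns_scal_one. }
    assert (Hunit : pn_norm (pn_scal (1 / pn_norm z) z) <= 1).
    { rewrite ns_norm_scal, Rabs_right by (apply Rle_ge, Rlt_le, Rdiv_lt_0_compat; lra).
      replace (1 / pn_norm z * pn_norm z) with 1 by (field; lra); lra. }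
    rewrite Hz' at 1. rewrite lo_scal, ns_norm_scal, Rabs_right by lra.
    rewrite Rmult_comm. apply Rmult_le_compat_r; [lra | apply HB, Hunit].
Qed.

Lemma opnorm_le_rpow_add (X Y : NormedSpace) (B : LinOp X Y) (p th C : R) (y : Y) (x : X) :
  opnorm_le B C -> 0 <= p -> 0 < th ->
  rpow (pn_norm (pn_add y (B x))) p
  <= rpow (1 + 1 / th) p * rpow (pn_norm y) p + rpow ((1 + th) * C) p * rpow (pn_norm x) p.
Proof.
  intros HC Hp Hth. eapply Rle_trans; [|apply rpow_add_le; auto;
    [apply ns_norm_nonneg | apply ns_norm_nonneg | eapply opnorm_le_nonneg; exact HC]].
  apply rpow_mono; [exact Hp|]. split; [apply ns_norm_nonneg|].
  eapply Rle_trans; [apply ns_norm_triangle|].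
  apply Rplus_le_compat_l, (opnorm_le_bound _ _ B C HC).
Qed.

Lemma weakly_null_scal (X : PreNormed) (D : Directed) (x : D -> X) (c : D -> R) :
  (forall l, Rabs (c l) <= 1) -> weakly_null x ->
  weakly_null (fun l => pn_scal (c l) (x l)).
Proof.
  intros Hc Hw f Hf eps Heps. destruct (Hw f Hf eps Heps) as [l0 Hl0].
  exists l0; intros l Hl. destruct Hf as [_ [Hfs _]]. rewrite Hfs, Rabs_mult.
  specialize (Hl0 l Hl); specialize (Hc l).
  pose proof (Rabs_pos (c l)); pose proof (Rabs_pos (f (x l))). nra.
Qed.

Lemma weakly_null_comp (Z : PreNormed) (W : NormedSpace) (T : Z -> W)
  (HTadd : forall a b, T (pn_add a b) = pn_add (T a) (T b))
  (HTscal : forall r a, T (pn_scal r a) = pn_scal r (T a))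
  (HTnorm : forall a, pn_norm (T a) <= pn_norm a)
  (D : Directed) (x : D -> Z) :
  weakly_null x -> weakly_null (fun l => T (x l)).
Proof.
  intros Hw f [Hfa [Hfs [C HC]]]. apply (Hw (fun a => f (T a))).
  split; [|split].
  - intros a b; rewrite HTadd; apply Hfa.
  - intros r a; rewrite HTscal; apply Hfs.
  - exists (Rabs C); intros a. eapply Rle_trans; [apply HC|].
    pose proof (ns_norm_nonneg _ (T a)); pose proof (Rle_abs C); pose proof (Rabs_pos C).
    apply Rle_trans with (Rabs C * pn_norm (T a)); [nra|].
    apply Rmult_le_compat_l; [lra | apply HTnorm].
Qed.

Section TpLocal.
Variables (p : R) (X : NormedSpace) (Y : PreNormed) (B : X -> Y) (C : R).
Hypothesis HC : tp_admissible p B C.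

(* Truncating the net at level t keeps it weakly null and bounded by t. *)
Lemma tp_admissible_truncated (y : Y) (D : Directed) (x : D -> X) (t e : R) :
  0 < t -> 0 < e -> weakly_null x ->
  eventually D (fun l => pn_norm (x l) <= t ->
    rpow (pn_norm (pn_add y (B (x l)))) p <= rpow (pn_norm y) p + rpow C p * rpow t p + e).
Proof.
  intros Ht He Hw.
  set (c := fun l => if Rle_dec (pn_norm (x l)) t then 1 else 0).
  assert (Hc : forall l, Rabs (c l) <= 1).
  { intros l; unfold c; destruct (Rle_dec _ _); [rewrite Rabs_R1 | rewrite Rabs_R0]; lra. }
  assert (Hct : forall l, pn_norm (pn_scal (c l) (x l)) <= t).
  { intros l; rewrite ns_norm_scal; unfold c.
    destruct (Rle_dec _ _); [rewrite Rabs_R1 | rewrite Rabs_R0]; lra. }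
  destruct (proj2 HC y t D _ Ht Hct (weakly_null_scal _ _ _ _ Hc Hw) e He) as [l0 Hl0].
  exists l0; intros l Hl Hxl. specialize (Hl0 l Hl); simpl in Hl0.
  unfold c in Hl0; destruct (Rle_dec _ _); [|contradiction].
  rewrite ns_scal_one in Hl0; exact Hl0.
Qed.

Lemma tp_admissible_eventually (y : Y) (sigma : R) (D : Directed) (x : D -> X) (eta e : R) :
  0 <= p -> 0 < eta -> 0 < e -> (forall l, pn_norm (x l) <= sigma) -> weakly_null x ->
  eventually D (fun l => rpow (pn_norm (pn_add y (B (x l)))) p <=
    rpow (pn_norm y) p + rpow C p * rpow (pn_norm (x l) + eta) p + e).
Proof.
  intros Hp Heta He Hx Hw. destruct (grid_point sigma eta Heta) as [G HG].
  destruct (eventually_forall_in D (seq 0 (S G))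
    (fun k l => pn_norm (x l) <= (INR k + 1) * eta ->
       rpow (pn_norm (pn_add y (B (x l)))) p <=
       rpow (pn_norm y) p + rpow C p * rpow ((INR k + 1) * eta) p + e)) as [l0 Hl0].
  { intros k _.
    apply tp_admissible_truncated; [pose proof (pos_INR k); nra | exact He | exact Hw]. }
  exists l0; intros l Hl.
  destruct (HG (pn_norm (x l))) as [k [HkG [Hk1 Hk2]]]; [split; [apply ns_norm_nonneg | apply Hx]|].
  eapply Rle_trans; [apply (Hl0 l Hl k); [apply in_seq; lia | exact Hk1]|].
  apply Rplus_le_compat_r, Rplus_le_compat_l, Rmult_le_compat_l; [apply rpow_nonneg|].
  apply rpow_mono; [exact Hp|]. split; [pose proof (pos_INR k); nra | exact Hk2].
Qed.

End TpLocal.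

Lemma tp_admissible_eventually_split (p : R) (X : NormedSpace) (Y : PreNormed) (B : X -> Y)
  (C C' th rho e : R) (y : Y) (sigma : R) (D : Directed) (x : D -> X) :
  tp_admissible p B C -> C <= C' -> 0 <= p -> 0 < th -> 0 < rho -> 0 < e ->
  (forall l, pn_norm (x l) <= sigma) -> weakly_null x ->
  eventually D (fun l => rpow (pn_norm (pn_add y (B (x l)))) p <=
    rpow (pn_norm y) p + rpow ((1 + th) * C') p * rpow (pn_norm (x l)) p
    + rpow (1 + 1 / th) p * rpow rho p + e).
Proof.
  intros HC HCC' Hp Hth Hrho He Hx Hw.
  assert (HC' : 0 < C') by (destruct HC; lra).
  eapply eventually_mono; [apply (tp_admissible_eventually p X Y B C HC y sigma D x (rho / C') e);
    auto; apply Rdiv_lt_0_compat; lra|].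
  intros l Hl. eapply Rle_trans; [exact Hl|].
  pose proof (ns_norm_nonneg _ (x l)).
  assert (0 < rho / C') by (apply Rdiv_lt_0_compat; lra).
  assert (rpow C p * rpow (pn_norm (x l) + rho / C') p
          <= rpow C' p * rpow (pn_norm (x l) + rho / C') p).
  { apply Rmult_le_compat_r; [apply rpow_nonneg|]. apply rpow_mono; [exact Hp | destruct HC; lra]. }
  assert (rpow C' p * rpow (pn_norm (x l) + rho / C') p
          <= rpow (1 + 1 / th) p * rpow rho p + rpow ((1 + th) * C') p * rpow (pn_norm (x l)) p).
  { rewrite <- rpow_mult by lra.
    replace (C' * (pn_norm (x l) + rho / C')) with (rho + C' * pn_norm (x l)) by (field; lra).
    apply rpow_add_le; lra. }
  lra.
Qed.

Section LpSum.
Variables (I : Type) (X : I -> NormedSpace) (p : R).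

Definition lp_mass (x : lpT X p) : R :=
  proj1_sig (completeness _ (@lp_partial_bound I X p x) (@lp_partial_ne I X p x)).

Definition lp_term (x : lpT X p) (i : I) : R := rpow (pn_norm (proj1_sig x i)) p.

Lemma lp_mass_ge x L : NoDup L -> lsum (lp_term x) L <= lp_mass x.
Proof.
  intros HL. apply (proj1 (proj2_sig (completeness _ (@lp_partial_bound I X p x)
    (@lp_partial_ne I X p x)))). exists L; split; [exact HL | reflexivity].
Qed.

Lemma lp_mass_le x S : (forall L, NoDup L -> lsum (lp_term x) L <= S) -> lp_mass x <= S.
Proof.
  intros H. apply (proj2 (proj2_sig (completeness _ (@lp_partial_bound I X p x)
    (@lp_partial_ne I X p x)))). intros r [L [HL ->]]; apply H, HL.
Qed.

Lemma lp_mass_approx x d : 0 < d -> exists F, NoDup F /\ lp_mass x - d < lsum (lp_term x) F.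
Proof.
  intros Hd. apply NNPP; intros Hn.
  assert (lp_mass x <= lp_mass x - d); [|lra].
  apply lp_mass_le; intros L HL. apply Rnot_lt_le; intros Hlt. apply Hn. exists L; auto.
Qed.

Lemma lp_norm_rpow x : 0 < p -> rpow (lp_norm X p x) p = lp_mass x.
Proof.
  intros Hp. apply rpow_rpow_1; [|field; lra].
  pose proof (lp_mass_ge x nil (NoDup_nil _)); simpl in *; lra.
Qed.

Lemma lp_coord_le x i : 0 < p -> pn_norm (proj1_sig x i) <= lp_norm X p x.
Proof.
  intros Hp. change (lp_norm X p x) with (rpow (lp_mass x) (1 / p)).
  rewrite <- (rpow_rpow_1 (pn_norm (proj1_sig x i)) p (1 / p))
    by (apply ns_norm_nonneg || (field; lra)).
  apply rpow_mono; [apply Rlt_le, Rdiv_lt_0_compat; lra|]. split; [apply rpow_nonneg|].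
  pose proof (lp_mass_ge x (i :: nil) (NoDup_cons i (fun h : In i nil => h) (NoDup_nil _))).
  unfold lp_term in *; simpl in *; lra.
Qed.

End LpSum.

Section C0Sum.
Variables (I : Type) (X : I -> NormedSpace).

Lemma c0_coord_le (x : c0T X) i : pn_norm (proj1_sig x i) <= c0_norm X x.
Proof.
  apply (proj1 (proj2_sig (completeness _ (@c0_vals_bound I X x) (@c0_vals_ne I X x)))).
  right; exists i; reflexivity.
Qed.

Lemma c0_norm_le (x : c0T X) S :
  0 <= S -> (forall i, pn_norm (proj1_sig x i) <= S) -> c0_norm X x <= S.
Proof.
  intros HS H.
  apply (proj2 (proj2_sig (completeness _ (@c0_vals_bound I X x) (@c0_vals_ne I X x)))).
  intros r [->|[i ->]]; auto.
Qed.

End C0Sum.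

Section Operators.
Variables (I : Type) (X Y : I -> NormedSpace) (A : forall i, LinOp (X i) (Y i))
  (HK : exists K, forall i (x : X i), pn_norm (A i x) <= K * pn_norm x).

Lemma lp_op_coord_eventually (p : R) (hp : 1 < p) (C th rho e : R) (i : I) (Ci : R)
  (y : lp_sum Y p hp) (sigma : R) (D : Directed) (x : D -> lp_sum X p hp) :
  tp_admissible p (A i) Ci -> Ci <= C -> 0 < th -> 0 < rho -> 0 < e ->
  (forall l, pn_norm (x l) <= sigma) -> weakly_null x ->
  eventually D (fun l => lp_term _ Y p (pn_add y (lp_op hp A HK (x l))) i
    <= lp_term _ Y p y i + rpow ((1 + th) * C) p * lp_term _ X p (x l) i
       + rpow (1 + 1 / th) p * rpow rho p + e).
Proof.
  intros HCi HCiC Hth Hrho He Hx Hw.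
  apply (tp_admissible_eventually_split p (X i) (Y i) (A i) Ci C th rho e
           (proj1_sig y i) sigma D (fun l => proj1_sig (x l) i)); auto; try lra.
  - intros l; eapply Rle_trans; [apply lp_coord_le; lra | apply Hx].
  - apply (weakly_null_comp (lp_sum X p hp) (X i) (fun z => proj1_sig z i));
      auto; intros; apply lp_coord_le; lra.
Qed.

Lemma lp_op_tp_admissible (p : R) (hp : 1 < p) (C th : R) : 0 < C -> 0 < th ->
  (forall i, opnorm_le (A i) C) ->
  (forall i, exists Ci, tp_admissible p (A i) Ci /\ Ci <= C) ->
  tp_admissible p (lp_op hp A HK) ((1 + th) * C).
Proof.
  intros HC Hth Hop Hadm. assert (Hp : 0 < p) by lra.
  split; [nra|]. intros y sigma D x _ Hx Hw e0 He0.
  set (K := rpow (1 + 1 / th) p). set (Q := rpow ((1 + th) * C) p).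
  assert (HK0 : 0 <= K) by apply rpow_nonneg.
  (* Budget: K d <= e0/2 pays for the tail of y off F, and n (2 e1) <= e0/2 for
     the slack on the n coordinates in F. *)
  set (d := e0 / 2 / (K + 1)).
  destruct (lp_mass_approx _ Y p y d) as [F [HF HFy]]; [unfold d; apply Rdiv_lt_0_compat; lra|].
  set (n := INR (length F)). assert (Hn : 0 <= n) by apply pos_INR.
  set (e1 := e0 / 4 / (n + 1)). assert (He1 : 0 < e1) by (apply Rdiv_lt_0_compat; lra).
  set (rho := rpow (e1 / (K + 1)) (1 / p)).
  assert (Hrho : 0 < rho) by (apply rpow_pos, Rdiv_lt_0_compat; lra).
  assert (Hslack : K * rpow rho p <= e1).
  { unfold rho; rewrite rpow_rpow_1 by (try apply Rlt_le, Rdiv_lt_0_compat; try field; lra).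
    apply mul_div_succ_le; lra. }
  destruct (eventually_forall_in D F (fun i l =>
      lp_term _ Y p (pn_add y (lp_op hp A HK (x l))) i
      <= lp_term _ Y p y i + Q * lp_term _ X p (x l) i + 2 * e1)) as [l0 Hl0].
  { intros i _. destruct (Hadm i) as [Ci [HCi HCiC]].
    eapply eventually_mono;
      [apply (lp_op_coord_eventually p hp C th rho e1 i Ci y sigma D x); auto; lra|].
    intros l Hl; fold K Q in Hl; lra. }
  exists l0; intros l Hl.
  change (rpow (lp_norm Y p (pn_add y (lp_op hp A HK (x l)))) p
          <= rpow (lp_norm Y p y) p + Q * rpow sigma p + e0).
  rewrite !lp_norm_rpow by exact Hp. apply lp_mass_le; intros L HL.
  assert (Hxs : lsum (lp_term _ X p (x l)) L <= rpow sigma p).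
  { eapply Rle_trans; [apply lp_mass_ge, HL|]. rewrite <- lp_norm_rpow by exact Hp.
    apply rpow_mono; [lra|]. split; [apply rpow_nonneg | apply Hx]. }
  eapply Rle_trans; [apply (lsum_split_estimate F L _ (lp_term _ Y p y)
    (lp_term _ X p (x l)) K Q (2 * e1) (lp_mass _ Y p y) d HF HL HK0);
    [lra | intros; apply lp_mass_ge; assumption | exact HFy | exact (Hl0 l Hl) |]|].
  - intros i _. unfold lp_term; simpl.
    apply (opnorm_le_rpow_add _ _ (A i)); [apply Hop | lra | exact Hth].
  - assert (K * d <= e0 / 2) by (apply mul_div_succ_le; lra).
    assert (n * e1 <= e0 / 4) by (apply mul_div_succ_le; lra).
    assert (Q * lsum (lp_term _ X p (x l)) L <= Q * rpow sigma p)
      by (apply Rmult_le_compat_l; [apply rpow_nonneg | exact Hxs]).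
    fold n. lra.
Qed.

Lemma c0_op_tinf_admissible (C : R) : 0 < C ->
  (forall i, opnorm_le (A i) C) ->
  (forall i, exists Ci, tinf_admissible (A i) Ci /\ Ci <= C) ->
  tinf_admissible (c0_op A HK) C.
Proof.
  intros HC Hop Hadm. split; [exact HC|]. intros y sigma D x Hs Hx Hw e0 He0.
  set (R0 := Rmax (pn_norm y) (C * sigma)).
  assert (HR0 : C * sigma <= R0) by apply Rmax_r.
  assert (Hxi : forall l i, pn_norm (proj1_sig (x l) i) <= sigma)
    by (intros l i; eapply Rle_trans; [apply c0_coord_le | apply Hx]).
  destruct (proj2_sig y e0 He0) as [F HF].
  destruct (eventually_forall_in D F (fun i l =>
      pn_norm (pn_add (proj1_sig y i) (A i (proj1_sig (x l) i))) <= R0 + e0)) as [l0 Hl0].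
  { intros i _. destruct (Hadm i) as [Ci [[_ HCi] HCiC]].
    destruct (HCi (proj1_sig y i) sigma D (fun l => proj1_sig (x l) i) Hs (fun l => Hxi l i))
      with (eps := e0) as [l0 Hl0]; [|exact He0|].
    - apply (weakly_null_comp (c0_sum X) (X i) (fun z => proj1_sig z i));
        auto; intros; apply c0_coord_le.
    - exists l0; intros l Hl. eapply Rle_trans; [apply Hl0, Hl|].
      apply Rplus_le_compat_r, Rmax_lub.
      + eapply Rle_trans; [apply c0_coord_le | apply Rmax_l].
      + eapply Rle_trans; [|exact HR0]. apply Rmult_le_compat_r; lra. }
  exists l0; intros l Hl. apply c0_norm_le; [assert (0 <= C * sigma) by nra; lra|].
  intros i; simpl.
  destruct (classic (In i F)) as [Hi|Hi]; [apply Hl0; assumption|].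
  assert (pn_norm (proj1_sig y i) < e0) by (apply Rnot_le_lt; intros Hc; apply Hi, HF, Hc).
  pose proof (opnorm_le_bound _ _ (A i) C (Hop i) (proj1_sig (x l) i)).
  pose proof (ns_norm_triangle _ (proj1_sig y i) (A i (proj1_sig (x l) i))).
  assert (C * pn_norm (proj1_sig (x l) i) <= C * sigma)
    by (apply Rmult_le_compat_l; [lra | apply Hxi]).
  lra.
Qed.

Lemma tp_le_lp_op (p : R) (hp : 1 < p) (M : R) : inhabited I ->
  (forall i, tp_le p (A i) M /\ opnorm_le (A i) M) -> tp_le p (lp_op hp A HK) M.
Proof.
  intros [i0] H eps Heps.
  assert (HM : 0 <= M) by (apply (opnorm_le_nonneg _ _ (A i0)), H).
  set (th := eps / (4 * M + eps)).
  exists ((1 + th) * (M + eps / 4)). split.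
  - apply lp_op_tp_admissible; [lra | apply Rdiv_lt_0_compat; lra | |].
    + intros i x Hx. eapply Rle_trans; [apply (proj2 (H i)), Hx | lra].
    + intros i. destruct (proj1 (H i) (eps / 4)) as [Ci [HCi HCiM]]; [lra|].
      exists Ci; split; [exact HCi | lra].
  - replace ((1 + th) * (M + eps / 4)) with (M + eps / 2) by (unfold th; field; lra). lra.
Qed.

Lemma tinf_le_c0_op (M : R) : inhabited I ->
  (forall i, tinf_le (A i) M /\ opnorm_le (A i) M) -> tinf_le (c0_op A HK) M.
Proof.
  intros [i0] H eps Heps.
  assert (HM : 0 <= M) by (apply (opnorm_le_nonneg _ _ (A i0)), H).
  exists (M + eps / 2). split; [|lra].
  apply c0_op_tinf_admissible; [lra | |].
  - intros i x Hx. eapply Rle_trans; [apply (proj2 (H i)), Hx | lra].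
  - intros i. destruct (proj1 (H i) (eps / 2)) as [Ci [HCi HCiM]]; [lra|].
    exists Ci; split; [exact HCi | lra].
Qed.

End Operators.

Theorem proposition5p1 :
  forall (I : Type) (X Y : I -> NormedSpace) (A : forall i, LinOp (X i) (Y i)),
    inhabited I ->
    forall (HK : exists K, forall i (x : X i), pn_norm (A i x) <= K * pn_norm x),
      (forall (p : R) (hp : 1 < p) (M : R),
          (forall i, tp_le p (A i) M /\ opnorm_le (A i) M) ->
          tp_le p (lp_op hp A HK) M)
      /\
      (forall M : R,
          (forall i, tinf_le (A i) M /\ opnorm_le (A i) M) ->
          tinf_le (c0_op A HK) M).
Proof.
  intros I X Y A HI HK. split.
  - intros p hp M H. apply tp_le_lp_op; assumption.
  - intros M H. apply tinf_le_c0_op; assumption.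
Qed.
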